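(* Let $d\ge1$, let $y=(y_S)_{S\in\mathcal{V}_{n,2d}}$ be a vector over $\mathbb{F}_q$, and let $0\le e\le d-1$ with $r_e=r_{e+1}>0$. Let $f_1,\dots,f_m$ be polynomials $f_\ell(x)=\sum_{U\in\mathcal{V}_{n,2}}c_{\ell,U}x^U$ with $c_{\ell,U}\in\mathbb{F}_q$, and suppose $y$ satisfies $\sum_{U\in\mathcal{V}_{n,2}}c_{\ell,U}y_{U\cup W}=0$ for every $\ell\in[m]$ and every $W\in\mathcal{V}_{n,2d-2}$. Then there are linear maps $T_1,\dots,T_n:C_e\to C_e$ such that: (i) $T_i^2=T_i$ for every $i$; (ii) $T_iT_j=T_jT_i$ for all $i,j$; (iii) for every $\ell\in[m]$, $\sum_{U\in\mathcal{V}_{n,2}}c_{\ell,U}T_U=0$ as a linear map on $C_e$, where $T_U:=\prod_{i\in U}T_i$ and $T_\emptyset$ is the identity.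
   Context: $\mathbb{F}_q$ is a finite field. $\mathcal{V}_{n,j}:=\{S\subseteq\{1,\dots,n\}:0\le|S|\le j\}$ (including $\emptyset$); $x^U:=\prod_{i\in U}x_i$, $x^\emptyset=1$. For $0\le e\le d$, $H_e(y)$ is the matrix with rows and columns indexed by $\mathcal{V}_{n,e}$ and $(S,T)$ entry $y_{S\cup T}$; $r_e:=\operatorname{rank}H_e(y)$; $C_e$ is the column space of $H_e(y)$. *)

From HB Require Import structures.
From mathcomp Require Import all_boot all_order all_algebra.
Set Implicit Arguments. Unset Strict Implicit. Unset Printing Implicit Defensive.
Import GRing.Theory.
Local Open Scope ring_scope.

Definition Vset (n j : nat) : {set {set 'I_n}} := [set S : {set 'I_n} | (#|S| <= j)%N].

Section Hankel.
Variables (F : fieldType) (n : nat) (y : {set 'I_n} -> F).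

Definition Hmx (e : nat) : 'M[F]_(#|Vset n e|) :=
  \matrix_(i, j) y (enum_val i :|: enum_val j).

Definition rk (e : nat) : nat := \rank (Hmx e).

Definition Csp (e : nat) : {vspace 'cV[F]_(#|Vset n e|)} :=
  <<[seq col j (Hmx e) | j <- enum 'I_(#|Vset n e|)]>>%VS.
End Hankel.

Definition TU (F : fieldType) (vT : vectType F) (n : nat)
  (T : 'I_n -> 'End(vT)) (U : {set 'I_n}) : 'End(vT) :=
  foldr (fun i f => (T i \o f)%VF) \1%VF (enum U).

From HB Require Import structures.
From mathcomp Require Import all_boot all_order all_algebra.
From mathcomp Require Import zify.
Set Implicit Arguments. Unset Strict Implicit. Unset Printing Implicit Defensive.
Import GRing.Theory.
Local Open Scope ring_scope.

(* Since rank H_e = rank H_{e+1}, every row of H_{e+1} is a combination of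
   its rows indexed by V_{n,e}: a linear relation among the columns of those
   rows holds in all of H_{e+1}, and those columns lie in C_e.  Writing H_e^X
   for the matrix (S,T) |-> y_{S ∪ X ∪ T}, this makes T_i : H_e w |-> H_e^{i} w
   a well-defined map on C_e with T_i (H_e^X w) = H_e^{{i} ∪ X} w for |X| <= 1.
   Hence T_U (H_e w) = H_e^U w for |U| <= 2, which gives T_i^2 = T_i and
   T_i T_j = T_j T_i, and turns the relations satisfied by y into
   sum_U c_U T_U = 0. *)

Lemma mxsubE (R : pzRingType) m n m' n' (f : 'I_m' -> 'I_m) (g : 'I_n' -> 'I_n)
    (A : 'M[R]_(m, n)) :
  mxsub f g A = rowsub f 1%:M *m A *m colsub g 1%:M.
Proof. by rewrite mulmx_colsub mulmx1 -rowsubE mxsubcr. Qed.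

Section FlatExtension.
Variables (F : fieldType) (p k : nat) (M : 'M[F]_p) (f : 'I_k -> 'I_p).
Hypothesis flat : \rank (mxsub f f M) = \rank M.

Lemma rank_rowsub_flat : \rank (rowsub f M) = \rank M.
Proof.
apply/eqP; rewrite eqn_leq {1}rowsubE mxrankM_maxr /= -[X in (X <= _)%N]flat.
by rewrite mxsubE -rowsubE mxrankM_maxl.
Qed.

Lemma flat_rowsub_ker q (z : 'M[F]_(p, q)) : rowsub f M *m z = 0 -> M *m z = 0.
Proof.
have sRM : (rowsub f M <= M)%MS by rewrite rowsubE submxMl.
have /submxP[D defM] : (M <= rowsub f M)%MS.
  by rewrite -(mxrank_leqif_sup sRM).2 rank_rowsub_flat.
by move=> Rz0; rewrite defM -mulmxA Rz0 mulmx0.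
Qed.

Lemma flat_col_submx q (g : 'I_q -> 'I_p) :
  ((mxsub f g M)^T <= (mxsub f f M)^T)%MS.
Proof.
have sHR : ((mxsub f f M)^T <= (rowsub f M)^T)%MS.
  by rewrite mxsubE -rowsubE trmx_mul submxMl.
have sRH : ((rowsub f M)^T <= (mxsub f f M)^T)%MS.
  by rewrite -(mxrank_leqif_sup sHR).2 !mxrank_tr flat rank_rowsub_flat.
apply: submx_trans sRH.
by rewrite mxsubE -rowsubE trmx_mul submxMl.
Qed.

Lemma flat_shift q r s (g : 'I_q -> 'I_p) (h : 'I_r -> 'I_p)
    (w : 'M[F]_(q, s)) (w' : 'M[F]_(k, s)) :
  mxsub f f M *m w' = mxsub f g M *m w -> mxsub h f M *m w' = mxsub h g M *m w.
Proof.
move=> eqHw.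
have /flat_rowsub_ker Mz0 :
    rowsub f M *m (colsub f 1%:M *m w' - colsub g 1%:M *m w) = 0.
  by rewrite mulmxBr (rowsubE f M) !mulmxA -!mxsubE eqHw subrr.
apply/eqP; rewrite -subr_eq0 (mxsubE h f) (mxsubE h g) -!mulmxA -!mulmxBr.
by rewrite Mz0 mulmx0.
Qed.

End FlatExtension.

Section ColumnSpace.
Variables (F : fieldType) (m n : nat) (A : 'M[F]_(m, n)).

Definition cpinvmx : 'M[F]_(n, m) := (pinvmx A^T)^T.

Lemma mulmx_cpinvmxK q (u : 'M[F]_(n, q)) : A *m (cpinvmx *m (A *m u)) = A *m u.
Proof.
apply: trmx_inj; rewrite !trmx_mul /cpinvmx trmxK mulmxKpV //.
exact: submxMl.
Qed.

Lemma mulmx_sum_col (u : 'cV[F]_n) : A *m u = \sum_j u j 0 *: col j A.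
Proof.
apply/matrixP=> i k; rewrite !mxE summxE; apply: eq_bigr => j _.
by rewrite !mxE (ord1 k) mulrC.
Qed.

Lemma span_colP (v : 'cV[F]_m) :
  reflect (exists u, v = A *m u) (v \in <<[seq col j A | j <- enum 'I_n]>>%VS).
Proof.
apply: (iffP idP) => [vA | [u ->]].
  have : (<<[seq col j A | j <- enum 'I_n]>> <= limg (linfun (mulmx A)))%VS.
    apply/span_subvP => _ /mapP[j _ ->]; rewrite colE -(lfunE (mulmx A)).
    exact/memv_img/memvf.
  move/subvP/(_ v vA)/memv_imgP => [u _ ->].
  by exists u; rewrite lfunE.
rewrite mulmx_sum_col; apply: memv_suml => j _; apply/memvZ/memv_span.
by apply: map_f; rewrite mem_enum.
Qed.

End ColumnSpace.

Section Restriction.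
Variables (F : fieldType) (m : nat) (U : {vspace 'cV[F]_m}) (A : 'M[F]_m).
Hypothesis AU : {in U, forall v, A *m v \in U}.

Definition restrict_mx : 'End(subvs_of U) :=
  (linfun (vsproj U) \o linfun (mulmx A) \o linfun vsval)%VF.

Lemma restrict_mxE x : vsval (restrict_mx x) = A *m vsval x.
Proof. by rewrite !comp_lfunE !lfunE /= vsprojK // AU ?subvsP. Qed.

End Restriction.

Section ShiftedHankel.
Variables (F : fieldType) (n e : nat) (y : {set 'I_n} -> F).

Lemma set0_Vset j : set0 \in Vset n j.
Proof. by rewrite inE cards0. Qed.

Lemma card_Vset_val j (s : 'I_#|Vset n j|) : (#|enum_val s| <= j)%N.
Proof. by have := enum_valP s; rewrite inE. Qed.

Definition Vidx j (X : {set 'I_n}) : 'I_#|Vset n j| :=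
  enum_rank_in (set0_Vset j) X.

Lemma VidxK j (X : {set 'I_n}) : (#|X| <= j)%N -> enum_val (Vidx j X) = X.
Proof. by move=> hX; rewrite enum_rankK_in // inE. Qed.

Definition shiftV (X : {set 'I_n}) (t : 'I_#|Vset n e|) : 'I_#|Vset n e.+1| :=
  Vidx e.+1 (X :|: enum_val t).

Lemma shiftV_val (X : {set 'I_n}) t :
  (#|X| <= 1)%N -> enum_val (shiftV X t) = X :|: enum_val t.
Proof.
move=> hX; rewrite VidxK //; apply: leq_trans (leq_card_setU _ _).1 _.
by rewrite -add1n leq_add // card_Vset_val.
Qed.

Definition Hshift (X : {set 'I_n}) : 'M[F]_#|Vset n e| :=
  \matrix_(a, t) y (enum_val a :|: X :|: enum_val t).

Lemma Hshift0 : Hshift set0 = Hmx y e.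
Proof. by apply/matrixP=> a t; rewrite !mxE setU0. Qed.

Lemma Hshift_mxsub (X Y : {set 'I_n}) : (#|X| <= 1)%N -> (#|Y| <= 1)%N ->
  Hshift (X :|: Y) = mxsub (shiftV X) (shiftV Y) (Hmx y e.+1).
Proof.
move=> hX hY; apply/matrixP=> a t; rewrite !mxE !shiftV_val //.
by rewrite setUA [enum_val a :|: X]setUC -!setUA.
Qed.

Lemma Hshift0_mxsub (X : {set 'I_n}) : (#|X| <= 1)%N ->
  Hshift X = mxsub (shiftV set0) (shiftV X) (Hmx y e.+1).
Proof. by move=> hX; rewrite -Hshift_mxsub ?cards0 // set0U. Qed.

Lemma Hmx_mxsub : Hmx y e = mxsub (shiftV set0) (shiftV set0) (Hmx y e.+1).
Proof. by rewrite -Hshift0_mxsub ?cards0 // Hshift0. Qed.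

Lemma sum_Hshift_eq0 (c : {set 'I_n} -> F) :
    (forall W, W \in Vset n (2 * e) -> \sum_(U in Vset n 2) c U * y (U :|: W) = 0) ->
  \sum_(U in Vset n 2) c U *: Hshift U = 0.
Proof.
move=> hc; apply/matrixP => a t; rewrite summxE mxE.
have at_small : enum_val a :|: enum_val t \in Vset n (2 * e).
  rewrite inE; apply: leq_trans (leq_card_setU _ _).1 _.
  by rewrite mul2n -addnn leq_add ?card_Vset_val.
rewrite -[RHS](hc _ at_small); apply: eq_bigr => U _; rewrite !mxE.
by rewrite [enum_val a :|: U]setUC -setUA.
Qed.

Hypothesis flat : rk y e = rk y e.+1.

Lemma Hmx_flat :
  \rank (mxsub (shiftV set0) (shiftV set0) (Hmx y e.+1)) = \rank (Hmx y e.+1).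
Proof. by rewrite -Hmx_mxsub. Qed.

Lemma Hshift_colspace (X : {set 'I_n}) : (#|X| <= 1)%N ->
  exists Z, Hshift X = Hmx y e *m Z.
Proof.
move=> hX; have /submxP[D eqD] := flat_col_submx Hmx_flat (shiftV X).
exists D^T; apply: trmx_inj.
by rewrite Hshift0_mxsub // eqD Hmx_mxsub trmx_mul trmxK.
Qed.

Definition shift_op (i : 'I_n) : 'M[F]_#|Vset n e| :=
  Hshift [set i] *m cpinvmx (Hmx y e).

Lemma shift_opE i (X : {set 'I_n}) (w : 'cV[F]_#|Vset n e|) : (#|X| <= 1)%N ->
  shift_op i *m (Hshift X *m w) = Hshift (i |: X) *m w.
Proof.
move=> hX; have [Z eqZ] := Hshift_colspace hX.
have := mulmx_cpinvmxK (Hmx y e) (Z *m w).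
rewrite (mulmxA (Hmx y e) Z w) -eqZ {1}Hmx_mxsub Hshift0_mxsub //.
move/(flat_shift Hmx_flat (shiftV [set i])).
by rewrite -!Hshift_mxsub ?cards0 ?cards1 // setU0 /shift_op -mulmxA.
Qed.

Lemma shift_op_Csp i : {in Csp y e, forall v, shift_op i *m v \in Csp y e}.
Proof.
move=> _ /span_colP[w ->]; rewrite -Hshift0 shift_opE ?cards0 // setU0.
have [Z ->] : exists Z, Hshift [set i] = Hmx y e *m Z.
  by apply: Hshift_colspace; rewrite cards1.
by apply/span_colP; exists (Z *m w); rewrite mulmxA.
Qed.

Definition Tshift (i : 'I_n) : 'End(subvs_of (Csp y e)) :=
  restrict_mx (Csp y e) (shift_op i).

Lemma vsval_Tshift i x : vsval (Tshift i x) = shift_op i *m vsval x.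
Proof. exact: restrict_mxE (@shift_op_Csp i) x. Qed.

Lemma Csp_lfunP (S T : 'End(subvs_of (Csp y e))) :
  (forall x w, vsval x = Hmx y e *m w -> vsval (S x) = vsval (T x)) -> S = T.
Proof.
move=> eqST; apply/lfunP => x; apply: subvs_inj.
by have /span_colP[w /eqST] := subvsP x.
Qed.

Lemma vsval_Tshift_Hmx i x w : vsval x = Hmx y e *m w ->
  vsval (Tshift i x) = Hshift [set i] *m w.
Proof. by move=> xw; rewrite vsval_Tshift xw -Hshift0 shift_opE ?cards0 ?setU0. Qed.

Lemma vsval_Tshift_comp i j x w : vsval x = Hmx y e *m w ->
  vsval ((Tshift i \o Tshift j)%VF x) = Hshift [set i; j] *m w.
Proof.
move=> xw; rewrite comp_lfunE vsval_Tshift (vsval_Tshift_Hmx _ xw).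
by rewrite shift_opE ?cards1.
Qed.

Lemma vsval_TU (U : {set 'I_n}) x w :
    (#|U| <= 2)%N -> vsval x = Hmx y e *m w ->
  vsval (TU Tshift U x) = Hshift U *m w.
Proof.
move=> U_small xw; rewrite /TU -[in RHS](set_enum U).
move: U_small; rewrite cardE; elim: (enum U) => [|i s IH] /= s_small.
  by rewrite id_lfunE xw set_nil Hshift0.
rewrite comp_lfunE vsval_Tshift IH 1?ltnW //.
by rewrite shift_opE ?set_cons // cardsE (leq_trans (card_size _)).
Qed.

End ShiftedHankel.

Theorem lemma4p5 (F : finFieldType) (n d e m : nat)
  (y : {set 'I_n} -> F) (c : 'I_m -> {set 'I_n} -> F) :
  (1 <= d)%N -> (e <= d - 1)%N ->
  rk y e = rk y e.+1 -> (0 < rk y e)%N ->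
  (forall (l : 'I_m) (W : {set 'I_n}), W \in Vset n (2 * d - 2) ->
     \sum_(U in Vset n 2) c l U * y (U :|: W) = 0) ->
  exists T : 'I_n -> 'End(subvs_of (Csp y e)),
    [/\ forall i, (T i \o T i)%VF = T i,
        forall i j, (T i \o T j)%VF = (T j \o T i)%VF
      & forall l : 'I_m, \sum_(U in Vset n 2) c l U *: TU T U = 0].
Proof.
move=> _ e_le flat _ hc; exists (Tshift e y); split.
- move=> i; apply: Csp_lfunP => x w xw.
  by rewrite (vsval_Tshift_comp flat _ _ xw) setUid (vsval_Tshift_Hmx flat _ xw).
- move=> i j; apply: Csp_lfunP => x w xw.
  by rewrite !(vsval_Tshift_comp flat _ _ xw) setUC.
- move=> l; apply: Csp_lfunP => x w xw.
  have TUxw U :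
      U \in Vset n 2 -> vsval (TU (Tshift e y) U x) = Hshift e y U *m w.
    by rewrite inE => U_small; apply: (vsval_TU flat).
  rewrite sum_lfunE zero_lfunE linear_sum linear0.
  under eq_bigr => U /TUxw TUx do rewrite scale_lfunE linearZ /= TUx scalemxAl.
  rewrite -mulmx_suml sum_Hshift_eq0 ?mul0mx // => W.
  rewrite inE => W_small; apply: hc; rewrite inE (leq_trans W_small) //; lia.
Qed.
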